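(* Let $1<q_1<q_2<\infty$. Then there exists a $2\pi$-periodic $\log$-H\''older continuous function $p:[0,2\pi]\to[q_1,q_2]$ (so $q_1\le p(\theta)\le q_2$ for all $\theta$) such that $H^{p(\cdot)}(\mathbb{D})\neq H^q(\mathbb{D})$ for every $q$ with $q_1\le q\le q_2$.
   Context: $\mathbb{D}$ is the open unit disk and $\mathbb{T}$ the unit circle. $p$ is $\log$-H\''older continuous if there is $C_{\log}>0$ with $|p(x)-p(y)|\le C_{\log}/\log(1/|x-y|)$ for all $x,y\in[0,2\pi]$. $L^{p(\cdot)}(\mathbb{T})$ is the space of measurable $f:\mathbb{T}\to\mathbb{C}$ with $\int_0^{2\pi}|f(e^{i\theta})|^{p(\theta)}\,d\theta<\infty$, with Luxemburg norm $\|f\|_{L^{p(\cdot)}(\mathbb{T})}=\inf\{\lambda>0:\int_0^{2\pi}|f(e^{i\theta})/\lambda|^{p(\theta)}d\theta\le1\}$. $H^{p(\cdot)}(\mathbb{D})$ is the space of analytic $f:\mathbb{D}\to\mathbb{C}$ with $\sup_{0\le r<1}\|f_r\|_{L^{p(\cdot)}(\mathbb{T})}<\infty$, where $f_r(\zeta)=f(r\zeta)$; $H^q(\mathbb{D})$ is the classical Hardy space (constant exponent $q$). *)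

From Stdlib Require Import Reals.
From Coquelicot Require Import Coquelicot.
Open Scope R_scope.

(* x ^ y for x >= 0 with the convention 0 ^ y = 0 (y > 0 throughout). *)
Definition powp (x y : R) : R := if Rle_dec x 0 then 0 else Rpower x y.

Definition polar (r t : R) : C := (r * cos t, r * sin t).

Definition analytic_on_disk (f : C -> C) : Prop :=
  forall z : C, Cmod z < 1 -> @ex_derive C_AbsRing C_NormedModule f z.

Definition log_Holder (p : R -> R) : Prop :=
  exists Clog : R, 0 < Clog /\
    forall x y : R, 0 <= x <= 2 * PI -> 0 <= y <= 2 * PI ->
      0 < Rabs (x - y) < 1 / 2 ->
      Rabs (p x - p y) <= Clog / ln (1 / Rabs (x - y)).

Definition modular (p : R -> R) (g : R -> C) : R :=
  RInt (fun t => powp (Cmod (g t)) (p t)) 0 (2 * PI).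

(* Luxemburg norm in L^{p(.)}(T), g given as a function of theta *)
Definition lux_norm (p : R -> R) (g : R -> C) : Rbar :=
  Glb_Rbar (fun lam => 0 < lam /\
     modular p (fun t => Cmult (g t) (RtoC (/ lam))) <= 1).

Definition circ (f : C -> C) (r : R) : R -> C := fun t => f (polar r t).

Definition in_Hpvar (p : R -> R) (f : C -> C) : Prop :=
  analytic_on_disk f /\
  exists M : R, forall r : R, 0 <= r < 1 ->
    Rbar_le (lux_norm p (circ f r)) (Finite M).

Definition in_Hq (q : R) (f : C -> C) : Prop :=
  analytic_on_disk f /\
  exists M : R, forall r : R, 0 <= r < 1 ->
    RInt (fun t => powp (Cmod (circ f r t)) q) 0 (2 * PI) <= M.

(* The exponent [p_exponent q1 q2] equals q2 on the arc cos t >= 1/2 around 1 and q1 on the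
   arc cos t <= -1/2 around -1; it is Lipschitz, hence log-Hoelder.  The spaces are separated
   by the test functions (1 - z)^(-1/q2) and (1 + z)^(-1/q2), built from the principal logarithm
   on the right half-plane.  On the circle of radius r their moduli are powers of the chord
   |1 -+ r e^(it)|, which is comparable to (1 - r) + |t| near the singular point, so the
   s-th power of its inverse is integrable uniformly in r when s < 1, while for s = 1 the
   integral grows like ln (1 / (1 - r)).  Hence, for q < q2, (1 - z)^(-1/q2) is in H^q but not
   in H^p(.), since p = q2 near z = 1; and (1 + z)^(-1/q2) is not in H^q2 but is in H^p(.),
   since p = q1 < q2 near z = -1 and, for p >= 1, a bounded modular bounds the Luxemburg norm. *)

From Stdlib Require Import Reals Lra.
From Coquelicot Require Import Coquelicot.
Open Scope R_scope.

(** * Complex exponential, principal logarithm and real powers *)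

Local Notation is_derive_C := (@is_derive C_AbsRing (AbsRing_NormedModule C_AbsRing)).

Lemma is_derive_C_eps (f : C -> C) (z l : C) :
  (forall eps, 0 < eps -> exists delta, 0 < delta /\
     forall w, Cmod (w - z) < delta ->
       Cmod (f w - f z - l * (w - z)) <= eps * Cmod (w - z)) ->
  is_derive_C f z l.
Proof.
  intros Hf. split; [apply is_linear_scal_l|].
  intros x Hx eps.
  rewrite <- (@is_filter_lim_locally_unique C_AbsRing (AbsRing_NormedModule C_AbsRing) z x Hx).
  destruct (Hf eps (cond_pos eps)) as [d [Hd Hw]].
  exists (mkposreal d Hd). intros w Hwz.
  change (Cmod (f w - f z - (w - z) * l) <= eps * Cmod (w - z)).
  rewrite (Cmult_comm (w - z)). exact (Hw w Hwz).
Qed.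

(* Derivatives of inner functions of the chain rule live in [AbsRing_NormedModule C_AbsRing],
   which is not convertible to the [C_NormedModule] of [analytic_on_disk]. *)
Lemma is_derive_C_NormedModule (f : C -> C) (z l : C) :
  is_derive_C f z l -> is_derive f z l.
Proof.
  intros [_ H]. split; [apply is_linear_scal_l|].
  intros x Hx eps. exact (H x Hx eps).
Qed.

Lemma Cmod_le_Rabs_Re_Im (z : C) : Cmod z <= Rabs (Re z) + Rabs (Im z).
Proof.
  destruct z as [x y]. unfold Cmod, Re, Im; cbn [fst snd].
  pose proof (Rabs_pos x); pose proof (Rabs_pos y).
  rewrite <- (sqrt_pow2 (Rabs x + Rabs y)) by lra.
  apply sqrt_le_1_alt. rewrite <- (pow2_abs x), <- (pow2_abs y). nra.
Qed.

Lemma Rabs_Im_le_Cmod (z : C) : Rabs (Im z) <= Cmod z.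
Proof. eapply Rle_trans; [apply Rmax_r | apply Rmax_Cmod]. Qed.

Lemma derivable_pt_lim_eps (f : R -> R) (x l : R) : derivable_pt_lim f x l ->
  forall eps, 0 < eps -> exists delta, 0 < delta /\ forall h, Rabs h < delta ->
    Rabs (f (x + h) - f x - l * h) <= eps * Rabs h.
Proof.
  intros Hf eps Heps. destruct (Hf eps Heps) as [d Hd].
  exists d. split; [apply cond_pos|]. intros h Hh.
  destruct (Req_dec h 0) as [->|Hh0].
  - rewrite Rplus_0_r, Rabs_R0. replace (f x - f x - l * 0) with 0 by ring.
    rewrite Rabs_R0. lra.
  - replace (f (x + h) - f x - l * h) with (((f (x + h) - f x) / h - l) * h)
      by (field; exact Hh0).
    rewrite Rabs_mult. apply Rmult_le_compat_r; [apply Rabs_pos|].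
    left. exact (Hd h Hh0 Hh).
Qed.

Definition Cexp (z : C) : C := (exp (Re z) * cos (Im z), exp (Re z) * sin (Im z)).

Lemma Cexp_add (z h : C) : Cexp (z + h) = (Cexp z * Cexp h)%C.
Proof.
  destruct z as [a b], h as [c d]. unfold Cexp, Re, Im; simpl.
  rewrite exp_plus, cos_plus, sin_plus. unfold Cmult; simpl. f_equal; ring.
Qed.

Lemma Cmod_Cexp (z : C) : Cmod (Cexp z) = exp (Re z).
Proof.
  unfold Cexp, Cmod; cbn [fst snd].
  replace ((exp (Re z) * cos (Im z)) ^ 2 + (exp (Re z) * sin (Im z)) ^ 2)
    with (exp (Re z) ^ 2 * ((sin (Im z))² + (cos (Im z))²)) by (unfold Rsqr; ring).
  rewrite sin2_cos2, Rmult_1_r. apply sqrt_pow2. left; apply exp_pos.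
Qed.

Lemma Cexp_sub_1_sub_id_le (a b e h : R) : 0 < e <= 1 -> Rabs a <= h -> Rabs b <= h -> h <= e ->
  Rabs (exp a - 1 - a) <= e * h -> Rabs (cos b - 1) <= e * h -> Rabs (sin b - b) <= e * h ->
  Cmod (Cexp (a, b) - 1 - (a, b)) <= 9 * (e * h).
Proof.
  intros He Ha Hb Hh Hu Hv Hw.
  set (u := exp a - 1 - a) in Hu. set (v := cos b - 1) in Hv. set (w := sin b - b) in Hw.
  replace (Cexp (a, b) - 1 - (a, b))%C with
    (u + v + a * v + u * v, w + a * b + a * w + u * b + u * w).
  2:{ unfold Cexp, u, v, w, Re, Im, Cminus, Cplus, Copp; simpl. f_equal; ring. }
  eapply Rle_trans; [apply Cmod_le_Rabs_Re_Im|]. unfold Re, Im; cbn [fst snd].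
  assert (Heh : e * h <= e) by (rewrite <- (Rmult_1_r e) at 2; apply Rmult_le_compat_l;
    pose proof (Rabs_pos a); lra).
  assert (Hu1 : Rabs u <= 1) by lra.
  assert (Hprod : forall x y c d, Rabs x <= c -> Rabs y <= d -> Rabs (x * y) <= c * d).
  { intros x y c d Hx Hy. rewrite Rabs_mult. apply Rmult_le_compat; auto using Rabs_pos. }
  pose proof (Hprod a v 1 (e * h) ltac:(lra) Hv); pose proof (Hprod u v 1 (e * h) Hu1 Hv).
  pose proof (Hprod a b e h ltac:(lra) Hb); pose proof (Hprod a w 1 (e * h) ltac:(lra) Hw).
  pose proof (Hprod u b e h ltac:(lra) Hb); pose proof (Hprod u w 1 (e * h) Hu1 Hw).
  pose proof (Rabs_triang (u + v + a * v) (u * v)); pose proof (Rabs_triang (u + v) (a * v));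
  pose proof (Rabs_triang u v).
  pose proof (Rabs_triang (w + a * b + a * w + u * b) (u * w));
  pose proof (Rabs_triang (w + a * b + a * w) (u * b));
  pose proof (Rabs_triang (w + a * b) (a * w)); pose proof (Rabs_triang w (a * b)).
  lra.
Qed.

Lemma Cexp_sub_1_sub_id (eps : R) : 0 < eps -> exists delta, 0 < delta /\
  forall h, Cmod h < delta -> Cmod (Cexp h - 1 - h) <= eps * Cmod h.
Proof.
  intros Heps. set (e := Rmin 1 (eps / 9)).
  assert (He : 0 < e <= 1) by (split; [apply Rmin_pos; lra | apply Rmin_l]).
  assert (He9 : 9 * e <= eps) by (pose proof (Rmin_r 1 (eps / 9)); unfold e; lra).
  assert (Dexp := derivable_pt_lim_exp 0). rewrite exp_0 in Dexp.
  assert (Dcos := derivable_pt_lim_cos 0). rewrite sin_0, Ropp_0 in Dcos.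
  assert (Dsin := derivable_pt_lim_sin 0). rewrite cos_0 in Dsin.
  destruct (derivable_pt_lim_eps _ _ _ Dexp e ltac:(lra)) as [d1 [Hd1 Hexp]].
  destruct (derivable_pt_lim_eps _ _ _ Dcos e ltac:(lra)) as [d2 [Hd2 Hcos]].
  destruct (derivable_pt_lim_eps _ _ _ Dsin e ltac:(lra)) as [d3 [Hd3 Hsin]].
  exists (Rmin e (Rmin d1 (Rmin d2 d3))).
  split; [repeat apply Rmin_pos; lra|]. intros [a b] Hh.
  pose proof (Rmin_l e (Rmin d1 (Rmin d2 d3))); pose proof (Rmin_r e (Rmin d1 (Rmin d2 d3))).
  pose proof (Rmin_l d1 (Rmin d2 d3)); pose proof (Rmin_r d1 (Rmin d2 d3)).
  pose proof (Rmin_l d2 d3); pose proof (Rmin_r d2 d3).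
  pose proof (re_le_Cmod (a, b)) as Ha; pose proof (Rabs_Im_le_Cmod (a, b)) as Hb.
  unfold Re, Im in Ha, Hb; cbn [fst snd] in Ha, Hb.
  rewrite exp_0 in Hexp. rewrite cos_0 in Hcos. rewrite sin_0 in Hsin.
  specialize (Hexp a ltac:(lra)). specialize (Hcos b ltac:(lra)). specialize (Hsin b ltac:(lra)).
  rewrite !Rplus_0_l in Hexp, Hcos, Hsin.
  replace (exp a - 1 - 1 * a) with (exp a - 1 - a) in Hexp by ring.
  replace (cos b - 1 - 0 * b) with (cos b - 1) in Hcos by ring.
  replace (sin b - 0 - 1 * b) with (sin b - b) in Hsin by ring.
  pose proof (Cmod_ge_0 (a, b)).
  eapply Rle_trans; [apply (Cexp_sub_1_sub_id_le a b e (Cmod (a, b))); try lra|].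
  - eapply Rle_trans; [exact Hexp | apply Rmult_le_compat_l; lra].
  - eapply Rle_trans; [exact Hcos | apply Rmult_le_compat_l; lra].
  - eapply Rle_trans; [exact Hsin | apply Rmult_le_compat_l; lra].
  - rewrite <- Rmult_assoc. apply Rmult_le_compat_r; lra.
Qed.

Lemma is_derive_Cexp (z : C) : is_derive Cexp z (Cexp z).
Proof.
  apply is_derive_C_NormedModule, is_derive_C_eps. intros eps Heps.
  assert (Hz : 0 < exp (Re z)) by apply exp_pos.
  destruct (Cexp_sub_1_sub_id (eps / exp (Re z))) as [d [Hd Hsmall]].
  { apply Rdiv_lt_0_compat; lra. }
  exists d. split; [exact Hd|]. intros w Hw.
  replace w with (z + (w - z))%C at 1 by ring. rewrite Cexp_add.
  replace (Cexp z * Cexp (w - z) - Cexp z - Cexp z * (w - z))%C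
    with (Cexp z * (Cexp (w - z) - 1 - (w - z)))%C by ring.
  rewrite Cmod_mult, Cmod_Cexp.
  replace (eps * Cmod (w - z)) with (exp (Re z) * (eps / exp (Re z) * Cmod (w - z)))
    by (field; lra).
  apply Rmult_le_compat_l; [lra | exact (Hsmall _ Hw)].
Qed.

(* the principal logarithm, meaningful only on the right half-plane [0 < Re w] *)
Definition Clog (w : C) : C := (ln (Cmod w), atan (Im w / Re w)).

Lemma Cexp_Clog (w : C) : 0 < Re w -> Cexp (Clog w) = w.
Proof.
  destruct w as [x y]. unfold Re, Im; cbn [fst snd]. intros Hx.
  assert (Hm : 0 < Cmod (x, y)) by (apply Cmod_gt_0; intros E; injection E; lra).
  assert (Hs : sqrt (1 + (y / x)²) = Cmod (x, y) / x).
  { unfold Cmod; cbn [fst snd].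
    replace (1 + (y / x)²) with ((x ^ 2 + y ^ 2) / x ^ 2) by (unfold Rsqr; field; lra).
    rewrite sqrt_div_alt by (apply pow2_gt_0; lra). rewrite sqrt_pow2; lra. }
  unfold Cexp, Clog, Re, Im; cbn [fst snd].
  rewrite exp_ln, cos_atan, sin_atan, Hs by exact Hm. f_equal; field; lra.
Qed.

Lemma continuous_C_eps (g : C_UniformSpace -> R) (w : C) : continuous g w ->
  forall eps, 0 < eps -> exists delta, 0 < delta /\
    forall v : C, Cmod (v - w) < delta -> Rabs (g v - g w) < eps.
Proof.
  intros Hg eps Heps.
  destruct (Hg _ (locally_ball (g w) (mkposreal eps Heps))) as [d Hd].
  exists d. split; [apply cond_pos|]. intros v Hv. apply Hd. split.
  - eapply Rle_lt_trans; [apply (re_le_Cmod (v - w)) | exact Hv].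
  - eapply Rle_lt_trans; [apply (Rabs_Im_le_Cmod (v - w)) | exact Hv].
Qed.

Lemma continuous_Cmod (w : C) : continuous (fun v : C_UniformSpace => Cmod v) w.
Proof.
  apply (continuous_comp (fun v : C_UniformSpace => fst v ^ 2 + snd v ^ 2) sqrt);
    [|apply continuous_sqrt].
  apply (@continuous_plus C_UniformSpace R_AbsRing R_NormedModule); simpl.
  - apply (continuous_mult (fun v : C_UniformSpace => fst v) (fun v => fst v * 1));
      [apply continuous_fst|].
    apply (continuous_mult (fun v : C_UniformSpace => fst v) (fun _ => 1));
      [apply continuous_fst | apply continuous_const].
  - apply (continuous_mult (fun v : C_UniformSpace => snd v) (fun v => snd v * 1));
      [apply continuous_snd|].
    apply (continuous_mult (fun v : C_UniformSpace => snd v) (fun _ => 1));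
      [apply continuous_snd | apply continuous_const].
Qed.

Lemma continuous_Im_div_Re (w : C) : Re w <> 0 ->
  continuous (fun v : C_UniformSpace => Im v / Re v) w.
Proof.
  intros Hw.
  apply (continuous_mult (fun v : C_UniformSpace => snd v) (fun v => / fst v));
    [apply continuous_snd|].
  apply (continuous_comp (fun v : C_UniformSpace => fst v) Rinv);
    [apply continuous_fst | apply continuous_Rinv, Hw].
Qed.

Lemma Clog_continuous (w : C) : 0 < Re w -> forall eps, 0 < eps -> exists delta, 0 < delta /\
  forall v, Cmod (v - w) < delta -> Cmod (Clog v - Clog w) < eps.
Proof.
  intros Hw eps Heps.
  assert (Hm : 0 < Cmod w) by (apply Cmod_gt_0; intros E; rewrite E in Hw; simpl in Hw; lra).
  destruct (continuous_C_eps _ w (continuous_comp _ ln w (continuous_Cmod w)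
    (continuous_ln _ Hm)) (eps / 2) ltac:(lra)) as [d1 [Hd1 H1]].
  destruct (continuous_C_eps _ w (continuous_comp _ atan w
    (continuous_Im_div_Re w ltac:(lra)) (continuous_atan _)) (eps / 2) ltac:(lra))
    as [d2 [Hd2 H2]].
  exists (Rmin d1 d2). split; [apply Rmin_pos; lra|]. intros v Hv.
  specialize (H1 v ltac:(pose proof (Rmin_l d1 d2); lra)).
  specialize (H2 v ltac:(pose proof (Rmin_r d1 d2); lra)).
  eapply Rle_lt_trans; [apply Cmod_le_Rabs_Re_Im|].
  unfold Clog, Re, Im in *; simpl in *. unfold Rminus in H1, H2. lra.
Qed.

Lemma Clog_sub (v w : C) : 0 < Re v -> 0 < Re w ->
  (v - w)%C = (w * (Cexp (Clog v - Clog w) - 1))%C.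
Proof.
  intros Hv Hw.
  rewrite <- (Cexp_Clog v Hv) at 1. rewrite <- (Cexp_Clog w Hw) at 1 2.
  replace (Clog v) with (Clog w + (Clog v - Clog w))%C at 1 by ring.
  rewrite Cexp_add. ring.
Qed.

Lemma is_derive_Clog (w : C) : 0 < Re w -> is_derive_C Clog w (/ w)%C.
Proof.
  intros Hw.
  assert (Hw0 : w <> 0%C) by (intros E; rewrite E in Hw; simpl in Hw; lra).
  assert (Hm : 0 < Cmod w) by (apply Cmod_gt_0; exact Hw0).
  apply is_derive_C_eps. intros eps Heps.
  set (e := Rmin (1 / 2) (eps * Cmod w / 2)).
  assert (He : 0 < e <= 1 / 2) by
    (split; [apply Rmin_pos; [lra | apply Rmult_lt_0_compat; nra] | apply Rmin_l]).
  assert (He' : e <= eps * Cmod w / 2) by apply Rmin_r.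
  destruct (Cexp_sub_1_sub_id e ltac:(lra)) as [d [Hd Hexp]].
  destruct (Clog_continuous w Hw d Hd) as [d' [Hd' Hlog]].
  exists (Rmin d' (Re w)). split; [apply Rmin_pos; lra|]. intros v Hv.
  pose proof (Rmin_l d' (Re w)); pose proof (Rmin_r d' (Re w)).
  assert (Hv0 : 0 < Re v).
  { pose proof (re_le_Cmod (v - w)) as X. unfold Re in *; simpl in X.
    assert (Y : Rabs (fst v + - fst w) < fst w) by lra.
    apply Rabs_def2 in Y. lra. }
  set (m := (Clog v - Clog w)%C).
  assert (Hvw := Clog_sub v w Hv0 Hw). fold m in Hvw.
  assert (Hexp_m := Hexp m (Hlog v ltac:(lra))).
  assert (Hnear : Cmod (Cexp m - 1) = Cmod (v - w) / Cmod w)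
    by (rewrite Hvw, Cmod_mult; field; lra).
  (* [m] is comparable to [v - w] because [Cexp m - 1] is *)
  assert (Hm_le : Cmod m <= 2 * (Cmod (v - w) / Cmod w)).
  { pose proof (Cmod_triangle (Cexp m - 1) (- (Cexp m - 1 - m))) as T.
    replace (Cexp m - 1 + - (Cexp m - 1 - m))%C with m in T by ring.
    rewrite Cmod_opp in T. pose proof (Cmod_ge_0 m). nra. }
  replace (m - / w * (v - w))%C with (- (Cexp m - 1 - m))%C
    by (rewrite Hvw; field; exact Hw0).
  rewrite Cmod_opp. eapply Rle_trans; [exact Hexp_m|].
  pose proof (Cmod_ge_0 m); pose proof (Cmod_ge_0 (v - w)).
  apply Rle_trans with (e * (2 * (Cmod (v - w) / Cmod w))); [nra|].
  replace (e * (2 * (Cmod (v - w) / Cmod w))) with (2 * e / Cmod w * Cmod (v - w))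
    by (field; lra).
  apply Rmult_le_compat_r; [lra|].
  apply (Rmult_le_reg_r (Cmod w)); [lra|]. field_simplify; lra.
Qed.

Definition Cpow_neg (s : R) (w : C) : C := Cexp (Clog w * RtoC (- s)).

Lemma Cmod_Cpow_neg (s : R) (w : C) : w <> 0%C -> Cmod (Cpow_neg s w) = Rpower (Cmod w) (- s).
Proof.
  intros Hw. unfold Cpow_neg. rewrite Cmod_Cexp. unfold Rpower, Clog, Re. simpl. f_equal. ring.
Qed.

Lemma ex_derive_Cpow_neg (s : R) (w : C) : 0 < Re w -> ex_derive (Cpow_neg s) w.
Proof.
  intros Hw. eexists. unfold Cpow_neg.
  apply (is_derive_comp Cexp (fun w => Clog w * RtoC (- s))%C); [apply is_derive_Cexp|].
  apply (is_derive_mult Clog (fun _ => RtoC (- s)));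
    [apply is_derive_Clog, Hw | apply is_derive_const | apply Cmult_comm].
Qed.

Lemma analytic_on_disk_Cpow_neg_affine (s : R) (a : C) : Cmod a <= 1 ->
  analytic_on_disk (fun z => Cpow_neg s (1 + a * z)%C).
Proof.
  intros Ha z Hz.
  assert (Hre : 0 < Re (1 + a * z)%C).
  { pose proof (re_le_Cmod (a * z)%C) as X. rewrite Cmod_mult in X.
    assert (Y : Cmod a * Cmod z < 1).
    { pose proof (Cmod_ge_0 z). apply Rle_lt_trans with (1 * Cmod z);
        [apply Rmult_le_compat_r|]; lra. }
    apply Rabs_le_between in X. rewrite re_plus, re_RtoC. lra. }
  destruct (ex_derive_Cpow_neg s _ Hre) as [l Hl].
  eexists. apply (is_derive_comp (Cpow_neg s) (fun z => 1 + a * z)%C); [exact Hl|].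
  apply (@is_derive_plus C_AbsRing (AbsRing_NormedModule C_AbsRing)
    (fun _ => RtoC 1) (fun z => a * z)%C); [apply is_derive_const|].
  apply (is_derive_mult (fun _ => a) (fun z => z));
    [apply is_derive_const | apply is_derive_id | apply Cmult_comm].
Qed.

(** * Real estimates and the exponent *)

Lemma Rpower_pos (x y : R) : 0 < Rpower x y.
Proof. apply exp_pos. Qed.

Lemma Rpower_m1 (x : R) : 0 < x -> Rpower x (- (1)) = / x.
Proof. intros Hx. rewrite Rpower_Ropp, Rpower_1; auto. Qed.

Lemma Rpower_neg_le_base (x y e : R) : 0 < x <= y -> 0 <= e -> Rpower y (- e) <= Rpower x (- e).
Proof.
  intros Hxy He. rewrite !Rpower_Ropp.
  apply Rinv_le_contravar; [apply Rpower_pos | apply Rle_Rpower_l; lra].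
Qed.

Lemma Rpower_neg_le_of_div (k y c e : R) : 1 <= k -> 0 < y -> y / k <= c -> 0 <= e <= 1 ->
  Rpower c (- e) <= k * Rpower y (- e).
Proof.
  intros Hk Hy Hc He.
  assert (Hyk : 0 < y / k) by (apply Rdiv_lt_0_compat; lra).
  eapply Rle_trans; [apply (Rpower_neg_le_base (y / k) c e); lra|].
  unfold Rdiv. rewrite <- Rpower_mult_distr by (try apply Rinv_0_lt_compat; lra).
  rewrite (Rmult_comm k). apply Rmult_le_compat_l; [left; apply Rpower_pos|].
  replace (Rpower (/ k) (- e)) with (Rpower k e)
    by (unfold Rpower; rewrite ln_Rinv by lra; f_equal; ring).
  rewrite <- (Rpower_1 k) at 2 by lra. apply Rle_Rpower; lra.
Qed.

Lemma Rinv_mult_lt_1 (a b : R) : 0 < a < b -> 0 < / b * a < 1.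
Proof.
  intros Hab. split; [apply Rmult_lt_0_compat; [apply Rinv_0_lt_compat|]; lra|].
  apply (Rmult_lt_reg_l b); [lra|]. field_simplify; lra.
Qed.

Lemma Rinv_mult_le_1 (a b : R) : 0 < b -> 0 <= a <= b -> 0 <= / b * a <= 1.
Proof.
  intros Hb Hab. split; [apply Rmult_le_pos; [left; apply Rinv_0_lt_compat|]; lra|].
  apply (Rmult_le_reg_l b); [lra|]. field_simplify; lra.
Qed.

Lemma continuous_of_Lipschitz (f : R -> R) (L x : R) : 0 <= L ->
  (forall y, Rabs (f y - f x) <= L * Rabs (y - x)) -> continuous f x.
Proof.
  intros HL Hf. apply continuity_pt_filterlim. intros eps Heps.
  exists (eps / (L + 1)). split; [apply Rdiv_lt_0_compat; lra|].
  intros y [_ Hy]. simpl in *. unfold R_dist in *.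
  eapply Rle_lt_trans; [apply Hf|].
  apply Rle_lt_trans with ((L + 1) * Rabs (y - x)).
  - pose proof (Rabs_pos (y - x)). nra.
  - apply (Rmult_lt_compat_l (L + 1)) in Hy; [|lra].
    replace ((L + 1) * (eps / (L + 1))) with eps in Hy by (field; lra). exact Hy.
Qed.

Lemma Lipschitz_log_Holder (p : R -> R) (L : R) : 0 < L ->
  (forall x y, Rabs (p x - p y) <= L * Rabs (x - y)) -> log_Holder p.
Proof.
  intros HL Hp. exists L. split; [exact HL|]. intros x y _ _ [Hu0 Hu1].
  set (u := Rabs (x - y)) in *.
  assert (Hln : 0 < ln (1 / u)).
  { rewrite <- ln_1. apply ln_increasing; [lra|].
    apply (Rmult_lt_reg_r u); [lra|]. field_simplify; lra. }
  (* [1 + ln y <= y] at [y = 1 / u] gives [u * ln (1 / u) <= 1] *)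
  assert (Hu : u * ln (1 / u) <= 1).
  { pose proof (exp_ineq1_le (ln (1 / u))) as E.
    rewrite exp_ln in E by (apply Rdiv_lt_0_compat; lra).
    apply (Rmult_le_compat_l u) in E; [|lra].
    replace (u * (1 / u)) with 1 in E by (field; lra). nra. }
  eapply Rle_trans; [apply Hp|]. fold u. unfold Rdiv at 1.
  apply Rmult_le_compat_l; [lra|].
  apply (Rmult_le_reg_r (ln (1 / u))); [exact Hln|].
  rewrite Rinv_l; lra.
Qed.

Lemma cos_Lipschitz (x y : R) : Rabs (cos x - cos y) <= Rabs (x - y).
Proof.
  destruct (MVT_abs cos (fun t => - sin t) y x) as [c [Hc _]].
  { intros c _. apply derivable_pt_lim_cos. }
  rewrite Hc. rewrite <- (Rmult_1_l (Rabs (x - y))) at 2.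
  apply Rmult_le_compat_r; [apply Rabs_pos|].
  rewrite Rabs_Ropp. apply Rabs_le, SIN_bound.
Qed.

Definition clamp01 (x : R) : R := Rmax 0 (Rmin 1 x).

Lemma clamp01_Lipschitz (x y : R) : Rabs (clamp01 x - clamp01 y) <= Rabs (x - y).
Proof.
  unfold clamp01, Rmax, Rmin.
  repeat destruct Rle_dec; unfold Rabs; repeat destruct Rcase_abs; lra.
Qed.

Lemma clamp01_bounds (x : R) : 0 <= clamp01 x <= 1.
Proof. unfold clamp01, Rmax, Rmin. repeat destruct Rle_dec; lra. Qed.

Lemma clamp01_of_ge1 (x : R) : 1 <= x -> clamp01 x = 1.
Proof. intros. unfold clamp01, Rmax, Rmin. repeat destruct Rle_dec; lra. Qed.

Lemma clamp01_of_le0 (x : R) : x <= 0 -> clamp01 x = 0.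
Proof. intros. unfold clamp01, Rmax, Rmin. repeat destruct Rle_dec; lra. Qed.

Definition p_exponent (q1 q2 t : R) : R := q1 + (q2 - q1) * clamp01 (cos t + 1 / 2).

Lemma p_exponent_Lipschitz (q1 q2 x y : R) : q1 <= q2 ->
  Rabs (p_exponent q1 q2 x - p_exponent q1 q2 y) <= (q2 - q1) * Rabs (x - y).
Proof.
  intros Hq. unfold p_exponent.
  replace (q1 + (q2 - q1) * clamp01 (cos x + 1 / 2) - (q1 + (q2 - q1) * clamp01 (cos y + 1 / 2)))
    with ((q2 - q1) * (clamp01 (cos x + 1 / 2) - clamp01 (cos y + 1 / 2))) by ring.
  rewrite Rabs_mult, (Rabs_pos_eq (q2 - q1)) by lra.
  apply Rmult_le_compat_l; [lra|].
  eapply Rle_trans; [apply clamp01_Lipschitz|].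
  replace (cos x + 1 / 2 - (cos y + 1 / 2)) with (cos x - cos y) by ring.
  apply cos_Lipschitz.
Qed.

Lemma continuous_p_exponent (q1 q2 t : R) : q1 <= q2 -> continuous (p_exponent q1 q2) t.
Proof.
  intros Hq. apply (continuous_of_Lipschitz _ (q2 - q1)); [lra|].
  intros y. apply p_exponent_Lipschitz, Hq.
Qed.

Lemma p_exponent_periodic (q1 q2 t : R) : p_exponent q1 q2 (t + 2 * PI) = p_exponent q1 q2 t.
Proof. unfold p_exponent. rewrite cos_plus, cos_2PI, sin_2PI. do 3 f_equal. ring. Qed.

Lemma p_exponent_bounds (q1 q2 t : R) : q1 <= q2 -> q1 <= p_exponent q1 q2 t <= q2.
Proof. intros Hq. unfold p_exponent. pose proof (clamp01_bounds (cos t + 1 / 2)). nra. Qed.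

Lemma p_exponent_eq_q2 (q1 q2 t : R) : 1 / 2 <= cos t -> p_exponent q1 q2 t = q2.
Proof. intros Ht. unfold p_exponent. rewrite clamp01_of_ge1 by lra. ring. Qed.

Lemma p_exponent_eq_q1 (q1 q2 t : R) : cos t <= - 1 / 2 -> p_exponent q1 q2 t = q1.
Proof. intros Ht. unfold p_exponent. rewrite clamp01_of_le0 by lra. ring. Qed.

(** * The chord |1 - r e^(it)| *)

Definition chord (r t : R) : R := sqrt (1 - 2 * r * cos t + r ^ 2).

Lemma chord_radicand (r t : R) : 1 - 2 * r * cos t + r ^ 2 = (1 - r) ^ 2 + 2 * r * (1 - cos t).
Proof. ring. Qed.

Lemma chord_radicand_pos (r t : R) : 0 <= r < 1 -> 0 < 1 - 2 * r * cos t + r ^ 2.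
Proof. intros Hr. rewrite chord_radicand. pose proof (COS_bound t). nra. Qed.

Lemma chord_pos (r t : R) : 0 <= r < 1 -> 0 < chord r t.
Proof. intros Hr. apply sqrt_lt_R0, chord_radicand_pos, Hr. Qed.

Lemma Cmod_1_sub_polar (r t : R) : Cmod (1 + RtoC (-1) * polar r t)%C = chord r t.
Proof.
  unfold Cmod, polar, chord. cbn [fst snd Cplus Cmult RtoC]. f_equal.
  transitivity (1 - 2 * r * cos t + r ^ 2 * ((sin t)² + (cos t)²)); [unfold Rsqr; ring|].
  rewrite sin2_cos2. ring.
Qed.

Lemma chord_opp (r t : R) : chord r (- t) = chord r t.
Proof. unfold chord. rewrite cos_neg. reflexivity. Qed.

Lemma chord_2PI_sub (r t : R) : chord r (2 * PI - t) = chord r t.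
Proof. unfold chord. rewrite cos_minus, cos_2PI, sin_2PI. f_equal. ring. Qed.

Lemma continuous_chord (r t : R) : 0 <= r < 1 -> continuous (chord r) t.
Proof.
  intros Hr. apply (ex_derive_continuous (chord r)). unfold chord.
  pose proof (chord_radicand_pos r t Hr). auto_derive. exact H.
Qed.

Lemma one_sub_cos_lower (u : R) : 0 <= u <= PI -> u ^ 2 / 18 <= 1 - cos u.
Proof.
  intros Hu. pose proof PI_4.
  replace (1 - cos u) with (2 * sin (u / 2) ^ 2)
    by (replace u with (2 * (u / 2)) at 2 by field; rewrite cos_2a_sin; ring).
  destruct (pre_sin_bound (u / 2) 0 ltac:(lra) ltac:(lra)) as [Hs _].
  unfold sin_approx, sin_term in Hs. simpl in Hs.
  assert (u / 6 <= sin (u / 2)) by nra. nra.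
Qed.

Lemma one_sub_cos_upper (u : R) : - 2 <= u <= 2 -> 1 - cos u <= u ^ 2 / 2.
Proof.
  intros Hu. destruct (pre_cos_bound u 0 ltac:(lra) ltac:(lra)) as [Hc _].
  unfold cos_approx, cos_term in Hc. simpl in Hc. lra.
Qed.

Lemma cos_ge_half (t : R) : 0 <= t <= 1 -> 1 / 2 <= cos t.
Proof. intros Ht. pose proof (one_sub_cos_upper t ltac:(lra)). nra. Qed.

Lemma chord_lower (r u : R) : 0 <= r <= 1 -> 0 <= u <= PI -> ((1 - r) + u) / 10 <= chord r u.
Proof.
  intros Hr Hu. pose proof PI_4. pose proof (one_sub_cos_lower u Hu).
  unfold chord. rewrite <- (sqrt_pow2 (((1 - r) + u) / 10)) by lra.
  apply sqrt_le_1_alt. rewrite chord_radicand.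
  replace ((((1 - r) + u) / 10) ^ 2) with (((1 - r) + u) ^ 2 / 100) by field.
  pose proof (pow2_ge_0 (1 - r)); pose proof (pow2_ge_0 u).
  destruct (Rle_dec (1 / 2) r).
  - assert (0 <= (2 * r - 1) * (1 - cos u)) by (apply Rmult_le_pos; lra).
    assert (((1 - r) + u) ^ 2 <= 2 * (1 - r) ^ 2 + 2 * u ^ 2)
      by (pose proof (pow2_ge_0 ((1 - r) - u)); nra).
    lra.
  - assert (0 <= 2 * r * (1 - cos u)) by (apply Rmult_le_pos; lra).
    assert (((1 - r) + u) ^ 2 <= 25) by nra. nra.
Qed.

Lemma chord_upper (r u : R) : 0 <= r <= 1 -> 0 <= u <= 2 -> chord r u <= (1 - r) + u.
Proof.
  intros Hr Hu. pose proof (one_sub_cos_upper u ltac:(lra)). pose proof (COS_bound u).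
  unfold chord. rewrite <- (sqrt_pow2 ((1 - r) + u)) by lra.
  apply sqrt_le_1_alt. rewrite chord_radicand. nra.
Qed.

Lemma chord_ge_half (r u : R) : 0 <= r <= 1 -> cos u <= 1 / 2 -> 1 / 2 <= chord r u.
Proof.
  intros Hr Hu. unfold chord. rewrite <- (sqrt_pow2 (1 / 2)) by lra.
  apply sqrt_le_1_alt. nra.
Qed.

(** * Integrals with a singularity *)

Lemma is_derive_Rpower_comp (u : R -> R) (du c t : R) : is_derive u t du -> 0 < u t ->
  is_derive (fun t => Rpower (u t) c) t (du * (c * Rpower (u t) (c - 1))).
Proof.
  intros Hu Hpos. apply (is_derive_comp (fun y => Rpower y c) u); [|exact Hu].
  apply is_derive_Reals, derivable_pt_lim_power, Hpos.
Qed.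

Lemma is_RInt_Rpower_comp (u : R -> R) (du : R) (a b e : R) : a <= b -> e <> 1 ->
  (forall t, a <= t <= b -> is_derive u t du /\ 0 < u t) ->
  is_RInt (fun t => du * Rpower (u t) (- e)) a b
    ((Rpower (u b) (1 - e) - Rpower (u a) (1 - e)) / (1 - e)).
Proof.
  intros Hab He Hu.
  replace ((Rpower (u b) (1 - e) - Rpower (u a) (1 - e)) / (1 - e)) with
    (minus (/ (1 - e) * Rpower (u b) (1 - e)) (/ (1 - e) * Rpower (u a) (1 - e)))
    by (unfold minus, plus, opp; simpl; field; lra).
  assert (D : forall t, a <= t <= b -> is_derive (fun t => / (1 - e) * Rpower (u t) (1 - e)) t
                                        (du * Rpower (u t) (- e))).
  { intros t Ht. destruct (Hu t Ht) as [Hd Hpos].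
    replace (du * Rpower (u t) (- e))
      with (/ (1 - e) * (du * ((1 - e) * Rpower (u t) (1 - e - 1))))
      by (replace (1 - e - 1) with (- e) by ring; field; lra).
    apply is_derive_scal, is_derive_Rpower_comp; assumption. }
  apply (is_RInt_derive (fun t => / (1 - e) * Rpower (u t) (1 - e))).
  - intros t Ht. rewrite Rmin_left, Rmax_right in Ht by lra. apply D, Ht.
  - intros t Ht. rewrite Rmin_left, Rmax_right in Ht by lra.
    apply (ex_derive_continuous (fun t => du * Rpower (u t) (- e))).
    destruct (Hu t Ht) as [Hd Hpos].
    eexists. apply is_derive_scal, is_derive_Rpower_comp; eassumption.
Qed.

Lemma RInt_le_Rpower_comp (F u : R -> R) (du c a b e : R) : a <= b -> e <> 1 ->
  (forall t, a <= t <= b -> is_derive u t du /\ 0 < u t) -> ex_RInt F a b ->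
  (forall t, a < t < b -> F t <= c * (du * Rpower (u t) (- e))) ->
  RInt F a b <= c * ((Rpower (u b) (1 - e) - Rpower (u a) (1 - e)) / (1 - e)).
Proof.
  intros Hab He Hu HF Hle.
  pose proof (is_RInt_scal _ _ _ c _ (is_RInt_Rpower_comp u du a b e Hab He Hu)) as I.
  change (scal c ?v) with (c * v) in I. rewrite <- (is_RInt_unique _ _ _ _ I).
  apply RInt_le; [exact Hab | exact HF | eexists; exact I | exact Hle].
Qed.

Lemma RInt_le_pow_left (F : R -> R) (K x a b e : R) : 0 <= K -> 0 < x -> a <= b -> 0 < e < 1 ->
  ex_RInt F a b -> (forall t, a < t < b -> F t <= K * Rpower (x + (t - a)) (- e)) ->
  RInt F a b <= K * (Rpower (x + (b - a)) (1 - e) / (1 - e)).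
Proof.
  intros HK Hx Hab He HF Hle.
  eapply Rle_trans.
  { apply (RInt_le_Rpower_comp F (fun t => x + (t - a)) 1 K a b e);
      [lra | apply Rlt_not_eq; lra | | exact HF |].
    - intros t Ht. split; [auto_derive; [exact I | ring] | lra].
    - intros t Ht. rewrite Rmult_1_l. apply Hle, Ht. }
  apply Rmult_le_compat_l; [exact HK|]. unfold Rdiv. apply Rmult_le_compat_r.
  - left. apply Rinv_0_lt_compat. lra.
  - pose proof (Rpower_pos (x + (a - a)) (1 - e)). lra.
Qed.

Lemma RInt_le_pow_right (F : R -> R) (K x a b e : R) : 0 <= K -> 0 < x -> a <= b -> 0 < e < 1 ->
  ex_RInt F a b -> (forall t, a < t < b -> F t <= K * Rpower (x + (b - t)) (- e)) ->
  RInt F a b <= K * (Rpower (x + (b - a)) (1 - e) / (1 - e)).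
Proof.
  intros HK Hx Hab He HF Hle.
  eapply Rle_trans.
  { apply (RInt_le_Rpower_comp F (fun t => x + (b - t)) (-1) (- K) a b e);
      [lra | apply Rlt_not_eq; lra | | exact HF |].
    - intros t Ht. split; [auto_derive; [exact I | ring] | lra].
    - intros t Ht. replace (- K * (-1 * Rpower (x + (b - t)) (- e)))
        with (K * Rpower (x + (b - t)) (- e)) by ring. apply Hle, Ht. }
  replace (- K * ((Rpower (x + (b - b)) (1 - e) - Rpower (x + (b - a)) (1 - e)) / (1 - e)))
    with (K * ((Rpower (x + (b - a)) (1 - e) - Rpower (x + (b - b)) (1 - e)) / (1 - e)))
    by (field; lra).
  apply Rmult_le_compat_l; [exact HK|]. unfold Rdiv. apply Rmult_le_compat_r.
  - left. apply Rinv_0_lt_compat. lra.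
  - pose proof (Rpower_pos (x + (b - b)) (1 - e)). lra.
Qed.

Lemma is_RInt_inv_left (x a : R) : 0 < x ->
  is_RInt (fun t => / (x + (t - a))) a (a + 1) (ln (x + 1) - ln x).
Proof.
  intros Hx.
  replace (ln (x + 1) - ln x) with (minus (ln (x + (a + 1 - a))) (ln (x + (a - a))))
    by (unfold minus, plus, opp; simpl;
        replace (a + 1 - a) with 1 by ring; rewrite Rminus_diag, Rplus_0_r; ring).
  apply (is_RInt_derive (fun t => ln (x + (t - a)))).
  - intros t Ht. rewrite Rmin_left, Rmax_right in Ht by lra.
    auto_derive; [lra | field; lra].
  - intros t Ht. rewrite Rmin_left, Rmax_right in Ht by lra.
    apply (ex_derive_continuous (fun t => / (x + (t - a)))). auto_derive. lra.
Qed.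

Lemma RInt_ge_neg_ln (F : R -> R) (c x a l h : R) : 0 < x <= 1 -> 0 <= c ->
  l <= a -> a + 1 <= h -> ex_RInt F l h -> (forall t, l < t < h -> 0 <= F t) ->
  (forall t, a < t < a + 1 -> c * / (x + (t - a)) <= F t) ->
  c * (- ln x) <= RInt F l h.
Proof.
  intros Hx Hc Hla Hah HF Hpos Hlow.
  assert (E1 : ex_RInt F l (a + 1)) by (apply (ex_RInt_Chasles_1 F l (a + 1) h); auto; lra).
  assert (E2 : ex_RInt F (a + 1) h) by (apply (ex_RInt_Chasles_2 F l (a + 1) h); auto; lra).
  assert (E3 : ex_RInt F l a) by (apply (ex_RInt_Chasles_1 F l a (a + 1)); auto; lra).
  assert (E4 : ex_RInt F a (a + 1)) by (apply (ex_RInt_Chasles_2 F l a (a + 1)); auto; lra).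
  rewrite <- (RInt_Chasles F l (a + 1) h), <- (RInt_Chasles F l a (a + 1)) by assumption.
  change (plus (plus ?u ?v) ?w) with (u + v + w).
  assert (G1 : 0 <= RInt F l a) by (apply RInt_ge_0; auto; intros; apply Hpos; lra).
  assert (G2 : 0 <= RInt F (a + 1) h) by (apply RInt_ge_0; auto; intros; apply Hpos; lra).
  pose proof (is_RInt_scal _ _ _ c _ (is_RInt_inv_left x a (proj1 Hx))) as I.
  change (scal c ?v) with (c * v) in I.
  assert (G3 : c * (ln (x + 1) - ln x) <= RInt F a (a + 1)).
  { rewrite <- (is_RInt_unique _ _ _ _ I).
    apply RInt_le; [lra | eexists; exact I | exact E4 | exact Hlow]. }
  assert (0 <= ln (x + 1)) by (rewrite <- ln_1; apply ln_le; lra).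
  assert (c * (- ln x) <= c * (ln (x + 1) - ln x)) by (apply Rmult_le_compat_l; lra).
  lra.
Qed.

Lemma continuous_Rpower_var (u e : R -> R) (t : R) : continuous u t -> 0 < u t ->
  continuous e t -> continuous (fun t => Rpower (u t) (e t)) t.
Proof.
  intros Hu Hpos He. unfold Rpower. apply continuous_exp_comp.
  apply (continuous_mult e (fun t => ln (u t))); [exact He|].
  apply (continuous_comp u ln); [exact Hu | apply continuous_ln, Hpos].
Qed.

Lemma continuous_chord_sub (r c t : R) : 0 <= r < 1 -> continuous (fun t => chord r (t - c)) t.
Proof.
  intros Hr. apply (continuous_comp (fun t => t - c) (chord r)); [|apply continuous_chord, Hr].
  apply (continuous_minus (fun t => t) (fun _ => c));
    [apply continuous_id | apply continuous_const].
Qed.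

Lemma ex_RInt_chord_pow (r c e a b : R) : 0 <= r < 1 ->
  ex_RInt (fun t => Rpower (chord r (t - c)) e) a b.
Proof.
  intros Hr. apply (ex_RInt_continuous (V := R_CompleteNormedModule)). intros t _.
  apply (continuous_Rpower_var (fun t => chord r (t - c)) (fun _ => e));
    [apply continuous_chord_sub, Hr | apply chord_pos, Hr | apply continuous_const].
Qed.

Lemma Rpower_add_PI_div_le (x e : R) : 0 <= x <= 1 -> e < 1 ->
  Rpower (x + PI) (1 - e) / (1 - e) <= Rpower (1 + PI) (1 - e) / (1 - e).
Proof.
  intros Hx He. pose proof PI_RGT_0. unfold Rdiv. apply Rmult_le_compat_r.
  - left. apply Rinv_0_lt_compat. lra.
  - apply Rle_Rpower_l; lra.
Qed.

Lemma RInt_chord_pow_le (r e : R) : 0 <= r < 1 -> 0 < e < 1 ->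
  RInt (fun t => Rpower (chord r t) (- e)) 0 (2 * PI)
    <= 20 * (Rpower (1 + PI) (1 - e) / (1 - e)).
Proof.
  intros Hr He. pose proof PI_RGT_0.
  set (F := fun t => Rpower (chord r t) (- e)).
  assert (HF : forall a b, ex_RInt F a b).
  { intros a b. apply (ex_RInt_ext (fun t => Rpower (chord r (t - 0)) (- e))).
    - intros t _. unfold F. rewrite Rminus_0_r. reflexivity.
    - apply ex_RInt_chord_pow, Hr. }
  pose proof (Rpower_add_PI_div_le (1 - r) e ltac:(lra) ltac:(lra)).
  assert (I1 : RInt F 0 PI <= 10 * (Rpower (1 - r + (PI - 0)) (1 - e) / (1 - e))).
  { apply RInt_le_pow_left; [lra | lra | lra | lra | apply HF|]. intros t Ht.
    apply Rpower_neg_le_of_div; [lra | lra | | lra].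
    rewrite Rminus_0_r. apply chord_lower; lra. }
  assert (I2 : RInt F PI (2 * PI) <= 10 * (Rpower (1 - r + (2 * PI - PI)) (1 - e) / (1 - e))).
  { apply RInt_le_pow_right; [lra | lra | lra | lra | apply HF|]. intros t Ht.
    apply Rpower_neg_le_of_div; [lra | lra | | lra].
    unfold F. rewrite <- chord_2PI_sub. apply chord_lower; lra. }
  rewrite <- (RInt_Chasles F 0 PI (2 * PI)) by apply HF.
  change (plus ?u ?v) with (u + v).
  replace (PI - 0) with PI in I1 by ring. replace (2 * PI - PI) with PI in I2 by ring.
  lra.
Qed.

Lemma RInt_chord_sub_PI_pow_le (r e : R) : 0 <= r < 1 -> 0 < e < 1 ->
  RInt (fun t => Rpower (chord r (t - PI)) (- e)) 0 (2 * PI)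
    <= 20 * (Rpower (1 + PI) (1 - e) / (1 - e)).
Proof.
  intros Hr He. pose proof PI_RGT_0.
  set (F := fun t => Rpower (chord r (t - PI)) (- e)).
  assert (HF : forall a b, ex_RInt F a b) by (intros; apply ex_RInt_chord_pow, Hr).
  pose proof (Rpower_add_PI_div_le (1 - r) e ltac:(lra) ltac:(lra)).
  assert (I1 : RInt F 0 PI <= 10 * (Rpower (1 - r + (PI - 0)) (1 - e) / (1 - e))).
  { apply RInt_le_pow_right; [lra | lra | lra | lra | apply HF|]. intros t Ht.
    apply Rpower_neg_le_of_div; [lra | lra | | lra].
    unfold F. rewrite <- chord_opp. replace (- (t - PI)) with (PI - t) by ring.
    apply chord_lower; lra. }
  assert (I2 : RInt F PI (2 * PI) <= 10 * (Rpower (1 - r + (2 * PI - PI)) (1 - e) / (1 - e))).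
  { apply RInt_le_pow_left; [lra | lra | lra | lra | apply HF|]. intros t Ht.
    apply Rpower_neg_le_of_div; [lra | lra | | lra]. apply chord_lower; lra. }
  rewrite <- (RInt_Chasles F 0 PI (2 * PI)) by apply HF.
  change (plus ?u ?v) with (u + v).
  replace (PI - 0) with PI in I1 by ring. replace (2 * PI - PI) with PI in I2 by ring.
  lra.
Qed.

(** * Modulars and Luxemburg norms *)

Lemma powp_pos (x y : R) : 0 < x -> powp x y = Rpower x y.
Proof. intros Hx. unfold powp. destruct (Rle_dec x 0); [lra | reflexivity]. Qed.

Lemma powp_Cmod_div (z : C) (lam P : R) : 0 < lam ->
  powp (Cmod (z * RtoC (/ lam))) P = powp (Cmod z) P * Rpower lam (- P).
Proof.
  intros Hlam. rewrite Cmod_mult, Cmod_R, Rabs_pos_eq by (left; apply Rinv_0_lt_compat, Hlam).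
  destruct (Req_dec (Cmod z) 0) as [Hz|Hz].
  - rewrite Hz, Rmult_0_l. unfold powp. destruct (Rle_dec 0 0); [ring | lra].
  - pose proof (Cmod_ge_0 z).
    rewrite !powp_pos by (try apply Rmult_lt_0_compat; try apply Rinv_0_lt_compat; lra).
    rewrite <- Rpower_mult_distr by (try apply Rinv_0_lt_compat; lra).
    f_equal. unfold Rpower. rewrite ln_Rinv by exact Hlam. f_equal. ring.
Qed.

Lemma powp_Cmod_Cpow_neg (s P : R) (w : C) : w <> 0%C ->
  powp (Cmod (Cpow_neg s w)) P = Rpower (Cmod w) (- s * P).
Proof.
  intros Hw. rewrite Cmod_Cpow_neg by exact Hw.
  rewrite powp_pos by apply Rpower_pos. apply Rpower_mult.
Qed.

Lemma lux_norm_le (p : R -> R) (g : R -> C) (lam : R) : 0 < lam ->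
  modular p (fun t => (g t * RtoC (/ lam))%C) <= 1 -> Rbar_le (lux_norm p g) lam.
Proof.
  intros Hlam Hmod. unfold lux_norm.
  match goal with |- Rbar_le (Glb_Rbar ?S) _ => apply (proj1 (Glb_Rbar_correct S)) end.
  split; assumption.
Qed.

Lemma lux_norm_ge (p : R -> R) (g : R -> C) (Lam : R) :
  (forall lam, 0 < lam < Lam -> 1 < modular p (fun t => (g t * RtoC (/ lam))%C)) ->
  Rbar_le Lam (lux_norm p g).
Proof.
  intros Hmod. unfold lux_norm.
  match goal with |- Rbar_le _ (Glb_Rbar ?S) => apply (proj2 (Glb_Rbar_correct S)) end.
  intros lam [Hlam Hle]. simpl.
  destruct (Rlt_le_dec lam Lam) as [Hlt|Hge]; [|exact Hge].
  specialize (Hmod lam (conj Hlam Hlt)). lra.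
Qed.

(** * The test functions *)

Lemma circ_Cpow_neg_add (s r t : R) :
  circ (fun z => Cpow_neg s (1 + RtoC 1 * z)%C) r t
  = circ (fun z => Cpow_neg s (1 + RtoC (-1) * z)%C) r (t - PI).
Proof.
  unfold circ, polar. rewrite cos_minus, sin_minus, cos_PI, sin_PI.
  f_equal. unfold RtoC, Cplus, Cmult; simpl. f_equal; f_equal; ring.
Qed.

Lemma powp_circ_Cpow_neg_sub (s P r t : R) : 0 <= r < 1 ->
  powp (Cmod (circ (fun z => Cpow_neg s (1 + RtoC (-1) * z)%C) r t)) P
  = Rpower (chord r t) (- s * P).
Proof.
  intros Hr. unfold circ. rewrite powp_Cmod_Cpow_neg, Cmod_1_sub_polar; [reflexivity|].
  intros E. pose proof (chord_pos r t Hr) as Hc.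
  rewrite <- Cmod_1_sub_polar, E, Cmod_0 in Hc. lra.
Qed.

Lemma powp_circ_Cpow_neg_sub_div (s P r t lam : R) : 0 <= r < 1 -> 0 < lam ->
  powp (Cmod (circ (fun z => Cpow_neg s (1 + RtoC (-1) * z)%C) r t * RtoC (/ lam))%C) P
  = Rpower (chord r t) (- s * P) * Rpower lam (- P).
Proof. intros Hr Hlam. rewrite powp_Cmod_div, powp_circ_Cpow_neg_sub; auto. Qed.

Lemma ex_RInt_Rpower_exponent (u p : R -> R) (s lam a b : R) : 0 < lam ->
  (forall t, continuous u t) -> (forall t, 0 < u t) -> (forall t, continuous p t) ->
  ex_RInt (fun t => Rpower (u t) (- s * p t) * Rpower lam (- p t)) a b.
Proof.
  intros Hlam Hu Hpos Hp. apply (ex_RInt_continuous (V := R_CompleteNormedModule)).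
  intros t _. apply (continuous_mult (fun t => Rpower (u t) (- s * p t))
                                     (fun t => Rpower lam (- p t))).
  - apply continuous_Rpower_var; auto.
    apply (continuous_scal_r (- s) p), Hp.
  - apply (continuous_Rpower_var (fun _ => lam)); [apply continuous_const | exact Hlam|].
    apply (continuous_opp p), Hp.
Qed.

Lemma Cmod_RtoC_pm1 (a : R) : a = 1 \/ a = -1 -> Cmod (RtoC a) <= 1.
Proof. intros [-> | ->]; rewrite Cmod_R; unfold Rabs; destruct Rcase_abs; lra. Qed.

Lemma in_Hq_Cpow_neg_sub (q s : R) : 0 < s * q < 1 ->
  in_Hq q (fun z => Cpow_neg s (1 + RtoC (-1) * z)%C).
Proof.
  intros Hsq. split; [apply analytic_on_disk_Cpow_neg_affine, Cmod_RtoC_pm1; right; reflexivity|].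
  exists (20 * (Rpower (1 + PI) (1 - s * q) / (1 - s * q))). intros r Hr.
  rewrite (RInt_ext _ (fun t => Rpower (chord r t) (- (s * q)))).
  - apply RInt_chord_pow_le; assumption.
  - intros t _. rewrite powp_circ_Cpow_neg_sub by exact Hr. f_equal. ring.
Qed.

Lemma not_in_Hq_Cpow_neg_add (q : R) : 0 < q ->
  ~ in_Hq q (fun z => Cpow_neg (/ q) (1 + RtoC 1 * z)%C).
Proof.
  intros Hq [_ [M HM]]. pose proof PI2_1.
  set (x := exp (- (Rabs M + 1))).
  assert (Hx : 0 < x <= 1).
  { split; [apply exp_pos|]. rewrite <- exp_0. left. apply exp_increasing.
    pose proof (Rabs_pos M). lra. }
  specialize (HM (1 - x) ltac:(lra)).
  rewrite (RInt_ext _ (fun t => Rpower (chord (1 - x) (t - PI)) (- (1)))) in HM.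
  2:{ intros t _. rewrite circ_Cpow_neg_add, powp_circ_Cpow_neg_sub by lra.
      f_equal. field. lra. }
  assert (Hlow : 1 * (- ln x)
                 <= RInt (fun t => Rpower (chord (1 - x) (t - PI)) (- (1))) 0 (2 * PI)).
  { apply (RInt_ge_neg_ln _ 1 x PI); try lra; [apply ex_RInt_chord_pow; lra | |].
    - intros t _. left. apply Rpower_pos.
    - intros t Ht. pose proof (chord_pos (1 - x) (t - PI) ltac:(lra)).
      rewrite Rpower_m1, Rmult_1_l by assumption. apply Rinv_le_contravar; [assumption|].
      replace (x + (t - PI)) with ((1 - (1 - x)) + (t - PI)) by ring.
      apply chord_upper; lra. }
  replace (ln x) with (- (Rabs M + 1)) in Hlow by (unfold x; rewrite ln_exp; ring).
  pose proof (Rle_abs M). lra.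
Qed.

Lemma not_in_Hpvar_Cpow_neg_sub (p : R -> R) (q : R) : 0 < q ->
  (forall t, continuous p t) -> (forall t, 0 <= t <= 1 -> p t = q) ->
  ~ in_Hpvar p (fun z => Cpow_neg (/ q) (1 + RtoC (-1) * z)%C).
Proof.
  intros Hq Hp Hpq [_ [M HM]]. pose proof PI2_1.
  set (Lam := Rmax M 1 + 1).
  assert (HLam : M < Lam /\ 1 < Lam)
    by (pose proof (Rmax_l M 1); pose proof (Rmax_r M 1); unfold Lam; lra).
  set (c := Rpower Lam (- q)).
  set (x := exp (- (Rpower Lam q + 1))).
  assert (Hx : 0 < x <= 1).
  { split; [apply exp_pos|]. rewrite <- exp_0. left. apply exp_increasing.
    pose proof (Rpower_pos Lam q). lra. }
  (* the choice of [x] makes [c * (- ln x) = 1 + c] *)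
  assert (Hcx : 1 < c * (- ln x)).
  { unfold x. rewrite ln_exp, Ropp_involutive, Rmult_plus_distr_l, Rmult_1_r.
    unfold c. rewrite Rpower_Ropp, Rinv_l by apply Rgt_not_eq, Rpower_pos.
    pose proof (Rinv_0_lt_compat _ (Rpower_pos Lam q)). lra. }
  assert (Hr : 0 <= 1 - x < 1) by lra.
  enough (HL : Rbar_le Lam
                 (lux_norm p (circ (fun z => Cpow_neg (/ q) (1 + RtoC (-1) * z)%C) (1 - x))))
    by (pose proof (Rbar_le_trans _ _ _ HL (HM (1 - x) Hr)); simpl in *; lra).
  apply lux_norm_ge. intros lam Hlam. unfold modular.
  rewrite (RInt_ext _ (fun t => Rpower (chord (1 - x) t) (- / q * p t) * Rpower lam (- p t)))
    by (intros t _; apply powp_circ_Cpow_neg_sub_div; lra).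
  eapply Rlt_le_trans; [exact Hcx|].
  apply (RInt_ge_neg_ln _ c x 0); try lra; [left; apply Rpower_pos | | |].
  - apply ex_RInt_Rpower_exponent;
      [lra | intros; apply continuous_chord | intros; apply chord_pos |]; auto.
  - intros t _. left. apply Rmult_lt_0_compat; apply Rpower_pos.
  - intros t Ht. rewrite Hpq by lra.
    pose proof (chord_pos (1 - x) t Hr).
    replace (- / q * q) with (- (1)) by (field; lra). rewrite Rpower_m1 by assumption.
    rewrite Rmult_comm. apply Rmult_le_compat.
    + left. apply Rinv_0_lt_compat. lra.
    + left. apply Rpower_pos.
    + apply Rinv_le_contravar; [assumption|].
      replace (x + (t - 0)) with ((1 - (1 - x)) + t) by ring. apply chord_upper; lra.
    + apply Rpower_neg_le_base; lra.
Qed.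

Lemma Rpower_neg_le_inv (lam e : R) : 1 <= lam -> 1 <= e -> Rpower lam (- e) <= / lam.
Proof. intros Hlam He. rewrite <- Rpower_m1 by lra. apply Rle_Rpower; lra. Qed.

Lemma chord_sub_PI_pow_le (p : R -> R) (q1 q r t : R) : 0 < q1 < q -> 0 <= r < 1 ->
  0 <= p t <= q -> (cos t <= - 1 / 2 -> p t = q1) ->
  Rpower (chord r (t - PI)) (- / q * p t) <= 2 + Rpower (chord r (t - PI)) (- (/ q * q1)).
Proof.
  intros Hq Hr Hpt Hpq1. pose proof (Rpower_pos (chord r (t - PI)) (- (/ q * q1))).
  destruct (Rle_dec (cos t) (- 1 / 2)) as [Hc|Hc].
  - rewrite Hpq1 by exact Hc. replace (- / q * q1) with (- (/ q * q1)) by ring. lra.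
  - assert (Hch : 1 / 2 <= chord r (t - PI)).
    { apply chord_ge_half; [lra|]. rewrite cos_minus, cos_PI, sin_PI. lra. }
    replace (- / q * p t) with (- (/ q * p t)) by ring.
    eapply Rle_trans; [apply (Rpower_neg_le_of_div 2 1); try lra|].
    + apply Rinv_mult_le_1; lra.
    + unfold Rpower at 1. rewrite ln_1, Rmult_0_r, exp_0. lra.
Qed.

Lemma in_Hpvar_Cpow_neg_add (p : R -> R) (q1 q : R) : 0 < q1 < q ->
  (forall t, continuous p t) -> (forall t, 1 <= p t <= q) ->
  (forall t, cos t <= - 1 / 2 -> p t = q1) ->
  in_Hpvar p (fun z => Cpow_neg (/ q) (1 + RtoC 1 * z)%C).
Proof.
  intros Hq Hp Hpq Hpq1. pose proof PI_RGT_0.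
  split; [apply analytic_on_disk_Cpow_neg_affine, Cmod_RtoC_pm1; left; reflexivity|].
  set (e := / q * q1).
  assert (He : 0 < e < 1) by (apply Rinv_mult_lt_1, Hq).
  set (B := 20 * (Rpower (1 + PI) (1 - e) / (1 - e))).
  set (Lam := Rmax 1 (2 * (2 * PI) + B)).
  assert (HLam : 1 <= Lam /\ 2 * (2 * PI) + B <= Lam) by (split; [apply Rmax_l | apply Rmax_r]).
  exists Lam. intros r Hr. apply lux_norm_le; [lra|]. unfold modular.
  set (F := fun t => Rpower (chord r (t - PI)) (- e)).
  assert (HF : ex_RInt F 0 (2 * PI)) by apply ex_RInt_chord_pow, Hr.
  assert (HB : RInt F 0 (2 * PI) <= B) by (apply RInt_chord_sub_PI_pow_le; assumption).
  rewrite (RInt_ext _ (fun t => Rpower (chord r (t - PI)) (- / q * p t) * Rpower Lam (- p t)))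
    by (intros t _; rewrite circ_Cpow_neg_add; apply powp_circ_Cpow_neg_sub_div; lra).
  eapply Rle_trans; [apply (RInt_le _ (fun t => / Lam * (2 + F t)))|].
  - lra.
  - apply ex_RInt_Rpower_exponent; [lra | intros; apply continuous_chord_sub, Hr
      | intros; apply chord_pos, Hr | exact Hp].
  - apply (ex_RInt_scal (fun t => 2 + F t)).
    apply (ex_RInt_plus (fun _ => 2) F); [apply ex_RInt_const | exact HF].
  - intros t _. rewrite Rmult_comm. apply Rmult_le_compat.
    + left. apply Rpower_pos.
    + left. apply Rpower_pos.
    + apply Rpower_neg_le_inv; [lra | apply Hpq].
    + apply (chord_sub_PI_pow_le p q1); [lra | exact Hr | pose proof (Hpq t); lra | apply Hpq1].
  - rewrite (RInt_scal (fun t => 2 + F t)), (RInt_plus (fun _ => 2) F), RInt_const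
      by (try apply (ex_RInt_plus (fun _ => 2) F); auto using ex_RInt_const).
    rewrite Rminus_0_r. change (plus ?a ?b) with (a + b).
    apply (Rmult_le_reg_l Lam); [lra|]. rewrite <- Rmult_assoc, Rinv_r by lra.
    unfold scal; simpl; unfold mult; simpl. lra.
Qed.

Theorem proposition3p1 (q1 q2 : R) (hq1 : 1 < q1) (hq12 : q1 < q2) :
  exists p : R -> R,
    (forall t : R, p (t + 2 * PI) = p t) /\
    log_Holder p /\
    (forall t : R, 0 <= t <= 2 * PI -> q1 <= p t <= q2) /\
    (forall q : R, q1 <= q <= q2 ->
       ~ (forall f : C -> C, in_Hpvar p f <-> in_Hq q f)).
Proof.
  exists (p_exponent q1 q2).
  assert (Hcont : forall t, continuous (p_exponent q1 q2) t)
    by (intros; apply continuous_p_exponent; lra).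
  split; [|split; [|split]].
  - apply p_exponent_periodic.
  - apply (Lipschitz_log_Holder _ (q2 - q1)); [lra|]. intros x y. apply p_exponent_Lipschitz; lra.
  - intros t _. apply p_exponent_bounds; lra.
  - intros q Hq Hiff. destruct (Rle_lt_or_eq_dec q q2 (proj2 Hq)) as [Hlt | ->].
    + apply (not_in_Hpvar_Cpow_neg_sub (p_exponent q1 q2) q2); [lra | exact Hcont | |].
      * intros t Ht. apply p_exponent_eq_q2, cos_ge_half, Ht.
      * apply Hiff, in_Hq_Cpow_neg_sub, Rinv_mult_lt_1. lra.
    + apply (not_in_Hq_Cpow_neg_add q2); [lra|].
      apply Hiff, (in_Hpvar_Cpow_neg_add _ q1); [lra | exact Hcont | | apply p_exponent_eq_q1].
      intros t. pose proof (p_exponent_bounds q1 q2 t ltac:(lra)). lra.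
Qed.
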